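(* For every 2-category $\mathcal{K}$ the 2-categories $\mathbf{Rmd}(\mathcal{K})$ and $\mathbf{LiftR}(\mathcal{K})$ are 2-isomorphic, via a 2-functor $\mathbf{Rmd}(\mathcal{K})\to\mathbf{LiftR}(\mathcal{K})$ that is the identity on objects and acts on 1-cells and 2-cells by the bijections sending a relative monad morphism $(F,F_0,\phi)$ to the lifting $(F,F_0,\tilde F,\tilde\phi)$ with $\tilde F(M,(-)_m)=(MF_0,\,f\mapsto(\phi B\cdot Ff)_m)$, $\tilde\phi_M=M\phi$, and a relative monad transformation $(p,p_0)$ to $(p,p_0,\tilde p)$ with $\tilde p_{(M,(-)_m)}=Mp_0$.
   Context: Conventions: 1-cells compose by juxtaposition; vertical composition of 2-cells is written $\cdot$; whiskering by juxtaposition. Relative monad: a relative monad $(X,I,S)$ in $\mathcal{K}$ consists of objects $X_0,X$, 1-cells $I,S\colon X_0\to X$, an operator $(-)^\dagger=(-)^\dagger_S\colon[I,S]\to[S,S]$ (extension: for every span $A,B\colon O\to X_0$ a function sending 2-cells $IA\Rightarrow SB$ to 2-cells $SA\Rightarrow SB$, natural in $O$, $A$ and $B$) and a 2-cell $s\colon I\Rightarrow S$ (unit) such that $k^\dagger\cdot sA=k$, $(sA)^\dagger=1_{SA}$, $(l^\dagger\cdot k)^\dagger=l^\dagger\cdot k^\dagger$ for all $k\colon IA\Rightarrow SB$, $l\colon IB\Rightarrow SC$. $\mathbf{Rmd}(\mathcal{K})$: a relative monad morphism $(F,F_0,\phi)\colon(X,I,S)\to(Y,J,T)$ (with $I\colon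 X_0\to X$, $J\colon Y_0\to Y$, units $s,t$) consists of 1-cells $F\colon X\to Y$, $F_0\colon X_0\to Y_0$ with $FI=JF_0$ and a 2-cell $\phi\colon FS\Rightarrow TF_0$ such that $\phi\cdot Fs=tF_0$ and, for all $A,B\colon O\to X_0$ and $k\colon IA\Rightarrow SB$, $\phi B\cdot F(k^\dagger_S)=(\phi B\cdot Fk)^\dagger_T\cdot\phi A$. A relative monad transformation $(p,p_0)\colon(F,F_0,\phi)\Rightarrow(F',F'_0,\phi')$ consists of 2-cells $p\colon F\Rightarrow F'$, $p_0\colon F_0\Rightarrow F'_0$ with $Jp_0=pI$ and $\phi'\cdot pS=Tp_0\cdot\phi$. These form a 2-category $\mathbf{Rmd}(\mathcal{K})$; the composite of $(F,F_0,\phi)$ followed by $(G,G_0,\gamma)$ is $(GF,G_0F_0,\gamma F_0\cdot G\phi)$, identities are $(1_X,1_{X_0},1_S)$, 2-cells compose componentwise. Relative right modules: for a relative monad $(X,I,T)$ (unit $t$, extension $(-)^\dagger$) and object $K$, a $K$-indexed relative right $T$-module is a 1-cell $M\colon X_0\to K$ with an operator $(-)_m\colon[I,T]\to[M,M]$ (so $h\colon IA\Rightarrow TB$ gives $h_m\colon MA\Rightarrow MB$, naturally in $O,A,B$) such that $(tA)_m=1_{MA}$ and $(k^\dagger\cdot h)_m=k_m\cdot h_m$ for all $h\colon IA\Rightarrow TB$, $k\colon IB\Rightarrow TC$. A morphism $(M,(-)_m)\to(N,(-)_n)$ is a 2-cell $g\colon M\Rightarrow N$ with $gB\cdot h_m=h_n\cdot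 gA$. These form a category $\mathrm{Mod}_T(K)$ and a 2-functor $\mathrm{Mod}_T(-)\colon\mathcal{K}\to\mathbf{Cat}$ acting by postcomposition. $J^*_{X_0}\colon\mathrm{Mod}_T(-)\to\mathcal{K}(X_0,-)$ is the forgetful 2-natural transformation; $U^*_X\colon\mathcal{K}(X,-)\to\mathrm{Mod}_T(-)$ sends $M\colon X\to K$ to $(MT,M(-)^\dagger)$; the modification $t\colon(-\circ I)\Rightarrow J^*_{X_0}U^*_X$ has components $Mt\colon MI\Rightarrow MT$. The same notation is used for any relative monad. Lifting to relative right modules: for relative monads $(X,I,S)$ ($I\colon X_0\to X$, unit $s$) and $(Y,J,T)$ ($J\colon Y_0\to Y$, unit $t$), a lifting to relative right modules from $(X,I,S)$ to $(Y,J,T)$ is a tuple $(F,F_0,\tilde F,\tilde\phi)$: 1-cells $F\colon X\to Y$, $F_0\colon X_0\to Y_0$ with $FI=JF_0$; a 2-natural transformation $\tilde F\colon\mathrm{Mod}_T(-)\to\mathrm{Mod}_S(-)$ with $J^*_{X_0}\tilde F=(-\circ F_0)J^*_{Y_0}$, so that $\tilde F(M,(-)_m)=(MF_0,(-)_{\tilde Fm})$; and a modification $\tilde\phi\colon U^*_X\circ(-\circ F)\Rightarrow\tilde F\circ U^*_Y$ between 2-natural transformations $\mathcal{K}(Y,-)\to\mathrm{Mod}_S(-)$; such that (1) for every $M\colon Y\to K$, $(J^*_{X_0}\tilde\phi)_M\cdot MFs=MtF_0$ as 2-cells $MJF_0=MFI\Rightarrow MTF_0$; (2) for every $(M,(-)_m)\in\mathrm{Mod}_T(K)$,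 all $A,B\colon O\to X_0$ and $f\colon IA\Rightarrow SB$, $f_{\tilde Fm}=(f_{\tilde FT}\cdot tF_0A)_m$, where $(-)_{\tilde FT}$ is the operator of $\tilde F(T,(-)^\dagger_T)$. Map of liftings: $(p,p_0,\tilde p)\colon(F,F_0,\tilde F,\tilde\phi)\Rightarrow(F',F'_0,\tilde F',\tilde\phi')$ consists of 2-cells $p\colon F\Rightarrow F'$, $p_0\colon F_0\Rightarrow F'_0$ with $Jp_0=pI$, and a modification $\tilde p\colon\tilde F\Rightarrow\tilde F'$ with $J^*_{X_0}\tilde p=(-\circ p_0)J^*_{Y_0}$ and $\tilde\phi'\cdot U^*_X(-\circ p)=\tilde pU^*_Y\cdot\tilde\phi$. $\mathbf{LiftR}(\mathcal{K})$: the 2-category whose objects are relative monads in $\mathcal{K}$, 1-cells liftings to relative right modules and 2-cells maps of liftings; composition of 1-cells composes the 1-cells of $\mathcal{K}$ and the 2-natural transformations and pastes the modifications, and 2-cells compose componentwise. *)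

Definition castc {H : Type} (C : H -> H -> Type) {f f' g g' : H}
  (e1 : f = f') (e2 : g = g') (x : C f g) : C f' g' :=
  match e1 in _ = f1 return C f1 g' with
  | eq_refl => match e2 in _ = g1 return C f g1 with eq_refl => x end
  end.

Record TwoCat := {
  ob : Type;
  hom : ob -> ob -> Type;
  cell : forall a b : ob, hom a b -> hom a b -> Type;
  idh : forall a : ob, hom a a;
  comp : forall a b c : ob, hom b c -> hom a b -> hom a c;
  idc : forall (a b : ob) (f : hom a b), cell a b f f;
  vcomp : forall (a b : ob) (f g h : hom a b),
      cell a b g h -> cell a b f g -> cell a b f h;
  hcomp : forall (a b c : ob) (f f' : hom a b) (g g' : hom b c),
      cell b c g g' -> cell a b f f' -> cell a c (comp a b c g f) (comp a b c g' f');
  comp_assoc : forall (a b c d : ob) (h : hom c d) (g : hom b c) (f : hom a b),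
      comp a c d h (comp a b c g f) = comp a b d (comp b c d h g) f;
  comp_idl : forall (a b : ob) (f : hom a b), comp a b b (idh b) f = f;
  comp_idr : forall (a b : ob) (f : hom a b), comp a a b f (idh a) = f
}.
Coercion ob : TwoCat >-> Sortclass.
Arguments hom {_} _ _.
Arguments cell {_ _ _} _ _.
Arguments idh {_} _.
Arguments comp {_ _ _ _} _ _.
Arguments idc {_ _ _} _.
Arguments vcomp {_ _ _ _ _ _} _ _.
Arguments hcomp {_ _ _ _ _ _ _ _} _ _.
Arguments comp_assoc {_ _ _ _ _} _ _ _.
Arguments comp_idl {_ _ _} _.
Arguments comp_idr {_ _ _} _.

Definition cst {K : TwoCat} {a b : K} {f f' g g' : hom a b}
  (e1 : f = f') (e2 : g = g') (x : cell f g) : cell f' g' :=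
  castc (@cell K a b) e1 e2 x.

Definition wl {K : TwoCat} {a b c : K} (g : hom b c) {f f' : hom a b}
  (x : cell f f') : cell (comp g f) (comp g f') := hcomp (idc g) x.
Definition wr {K : TwoCat} {a b c : K} {g g' : hom b c} (x : cell g g')
  (f : hom a b) : cell (comp g f) (comp g' f) := hcomp x (idc f).

Record IsTwoCat (K : TwoCat) : Prop := {
  vcomp_assoc : forall (a b : K) (f g h i : hom a b) (x : cell h i) (y : cell g h)
      (z : cell f g), vcomp x (vcomp y z) = vcomp (vcomp x y) z;
  vcomp_idl : forall (a b : K) (f g : hom a b) (x : cell f g), vcomp (idc g) x = x;
  vcomp_idr : forall (a b : K) (f g : hom a b) (x : cell f g), vcomp x (idc f) = x;
  interchange : forall (a b c : K) (f f' f'' : hom a b) (g g' g'' : hom b c)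
      (y1 : cell g' g'') (y0 : cell g g') (x1 : cell f' f'') (x0 : cell f f'),
      hcomp (vcomp y1 y0) (vcomp x1 x0) = vcomp (hcomp y1 x1) (hcomp y0 x0);
  hcomp_idc : forall (a b c : K) (f : hom a b) (g : hom b c),
      hcomp (idc g) (idc f) = idc (comp g f);
  hcomp_assoc : forall (a b c d : K) (f f' : hom a b) (g g' : hom b c) (h h' : hom c d)
      (x : cell h h') (y : cell g g') (z : cell f f'),
      cst (comp_assoc h g f) (comp_assoc h' g' f') (hcomp x (hcomp y z))
      = hcomp (hcomp x y) z;
  hcomp_idl : forall (a b : K) (f f' : hom a b) (x : cell f f'),
      cst (comp_idl f) (comp_idl f') (hcomp (idc (idh b)) x) = x;
  hcomp_idr : forall (a b : K) (f f' : hom a b) (x : cell f f'),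
      cst (comp_idr f) (comp_idr f') (hcomp x (idc (idh a))) = x
}.

Section Defs.
Context {K : TwoCat}.

(** Operators [I,S] -> [M,N]: for every span A,B : O -> X0, a function from
    2-cells IA => SB to 2-cells MA => NB. *)
Definition OpT {X0 X Z : K} (I S : hom X0 X) (M N : hom X0 Z) : Type :=
  forall (O : K) (A B : hom O X0), cell (comp I A) (comp S B) -> cell (comp M A) (comp N B).

Definition op_natural {X0 X Z : K} (I S : hom X0 X) (M : hom X0 Z) (op : OpT I S M M) : Prop :=
  (forall (O O' : K) (C : hom O' O) (A B : hom O X0) (k : cell (comp I A) (comp S B)),
      op O' (comp A C) (comp B C)
         (cst (eq_sym (comp_assoc I A C)) (eq_sym (comp_assoc S B C)) (wr k C))
      = cst (eq_sym (comp_assoc M A C)) (eq_sym (comp_assoc M B C)) (wr (op O A B k) C))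
  /\ (forall (O : K) (A A' B : hom O X0) (a : cell A' A) (k : cell (comp I A) (comp S B)),
      op O A' B (vcomp k (wl I a)) = vcomp (op O A B k) (wl M a))
  /\ (forall (O : K) (A B B' : hom O X0) (b : cell B B') (k : cell (comp I A) (comp S B)),
      op O A B' (vcomp (wl S b) k) = vcomp (wl M b) (op O A B k)).

Record RelMonad := {
  rX0 : K; rX : K;
  rI : hom rX0 rX; rS : hom rX0 rX;
  rext : OpT rI rS rS rS;
  runit : cell rI rS
}.

Record IsRelMonad (R : RelMonad) : Prop := {
  rm_natural : op_natural (rI R) (rS R) (rS R) (rext R);
  rm_unit_l : forall (O : K) (A B : hom O (rX0 R)) (k : cell (comp (rI R) A) (comp (rS R) B)),
      vcomp (rext R O A B k) (wr (runit R) A) = k;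
  rm_unit_r : forall (O : K) (A : hom O (rX0 R)),
      rext R O A A (wr (runit R) A) = idc (comp (rS R) A);
  rm_assoc : forall (O : K) (A B C : hom O (rX0 R))
      (k : cell (comp (rI R) A) (comp (rS R) B)) (l : cell (comp (rI R) B) (comp (rS R) C)),
      rext R O A C (vcomp (rext R O B C l) k) = vcomp (rext R O B C l) (rext R O A B k)
}.

Definition ModOp (R : RelMonad) {Z : K} (M : hom (rX0 R) Z) : Type :=
  OpT (rI R) (rS R) M M.

Record IsModule (R : RelMonad) {Z : K} (M : hom (rX0 R) Z) (op : ModOp R M) : Prop := {
  mod_natural : op_natural (rI R) (rS R) M op;
  mod_unit : forall (O : K) (A : hom O (rX0 R)),
      op O A A (wr (runit R) A) = idc (comp M A);
  mod_comp : forall (O : K) (A B C : hom O (rX0 R))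
      (h : cell (comp (rI R) A) (comp (rS R) B)) (k : cell (comp (rI R) B) (comp (rS R) C)),
      op O A C (vcomp (rext R O B C k) h) = vcomp (op O B C k) (op O A B h)
}.

Definition IsModMor (R : RelMonad) {Z : K} {M N : hom (rX0 R) Z}
  (opM : ModOp R M) (opN : ModOp R N) (g : cell M N) : Prop :=
  forall (O : K) (A B : hom O (rX0 R)) (h : cell (comp (rI R) A) (comp (rS R) B)),
    vcomp (wr g B) (opM O A B h) = vcomp (opN O A B h) (wr g A).

(** U*_X M = (M S, M (-)^dagger) *)
Definition Uop (R : RelMonad) {Z : K} (M : hom (rX R) Z) : ModOp R (comp M (rS R)) :=
  fun O A B h => cst (comp_assoc M (rS R) A) (comp_assoc M (rS R) B) (wl M (rext R O A B h)).

Definition postop (R : RelMonad) {Z Z' : K} (G : hom Z Z') {M : hom (rX0 R) Z}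
  (op : ModOp R M) : ModOp R (comp G M) :=
  fun O A B h => cst (comp_assoc G M A) (comp_assoc G M B) (wl G (op O A B h)).

Record RmdMor (R1 R2 : RelMonad) := {
  mF : hom (rX R1) (rX R2);
  mF0 : hom (rX0 R1) (rX0 R2);
  meq : comp mF (rI R1) = comp (rI R2) mF0;
  mphi : cell (comp mF (rS R1)) (comp (rS R2) mF0)
}.
Arguments mF {R1 R2} _.
Arguments mF0 {R1 R2} _.
Arguments meq {R1 R2} _.
Arguments mphi {R1 R2} _.

(** phi B . F k, seen as a 2-cell J(F0 A) => T(F0 B) *)
Definition bindphi {R1 R2 : RelMonad} (m : RmdMor R1 R2) {O : K} {A B : hom O (rX0 R1)}
  (k : cell (comp (rI R1) A) (comp (rS R1) B))
  : cell (comp (rI R2) (comp (mF0 m) A)) (comp (rS R2) (comp (mF0 m) B)) :=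
  cst (eq_trans (f_equal (fun h => comp h A) (meq m)) (eq_sym (comp_assoc (rI R2) (mF0 m) A)))
      (eq_sym (comp_assoc (rS R2) (mF0 m) B))
      (vcomp (wr (mphi m) B)
             (cst (comp_assoc (mF m) (rI R1) A) (comp_assoc (mF m) (rS R1) B) (wl (mF m) k))).

Definition IsRmdMor {R1 R2 : RelMonad} (m : RmdMor R1 R2) : Prop :=
  cst (meq m) eq_refl (vcomp (mphi m) (wl (mF m) (runit R1))) = wr (runit R2) (mF0 m)
  /\ forall (O : K) (A B : hom O (rX0 R1)) (k : cell (comp (rI R1) A) (comp (rS R1) B)),
      vcomp (wr (mphi m) B)
            (cst (comp_assoc (mF m) (rS R1) A) (comp_assoc (mF m) (rS R1) B)
                 (wl (mF m) (rext R1 O A B k)))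
      = vcomp (cst (comp_assoc (rS R2) (mF0 m) A) (comp_assoc (rS R2) (mF0 m) B)
                   (rext R2 O (comp (mF0 m) A) (comp (mF0 m) B) (bindphi m k)))
              (wr (mphi m) A).

Definition IsRmdTrans {R1 R2 : RelMonad} (m m' : RmdMor R1 R2)
  (p : cell (mF m) (mF m')) (p0 : cell (mF0 m) (mF0 m')) : Prop :=
  cst (meq m) (meq m') (wr p (rI R1)) = wl (rI R2) p0
  /\ vcomp (mphi m') (wr p (rS R1)) = vcomp (wl (rS R2) p0) (mphi m).

Definition ceq {a0 a b0 b c0 c : K} (I : hom a0 a) (J : hom b0 b) (V : hom c0 c)
  (F : hom a b) (F0 : hom a0 b0) (G : hom b c) (G0 : hom b0 c0)
  (e1 : comp F I = comp J F0) (e2 : comp G J = comp V G0)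
  : comp (comp G F) I = comp V (comp G0 F0) :=
  eq_trans (eq_sym (comp_assoc G F I))
  (eq_trans (f_equal (fun h => comp G h) e1)
  (eq_trans (comp_assoc G J F0)
  (eq_trans (f_equal (fun h => comp h F0) e2)
            (eq_sym (comp_assoc V G0 F0))))).

Definition rid (R : RelMonad) : RmdMor R R := {|
  mF := idh (rX R);
  mF0 := idh (rX0 R);
  meq := eq_trans (comp_idl (rI R)) (eq_sym (comp_idr (rI R)));
  mphi := cst (eq_sym (comp_idl (rS R))) (eq_sym (comp_idr (rS R))) (idc (rS R)) |}.

Definition rcomp {R1 R2 R3 : RelMonad} (m : RmdMor R1 R2) (n : RmdMor R2 R3)
  : RmdMor R1 R3 := {|
  mF := comp (mF n) (mF m);
  mF0 := comp (mF0 n) (mF0 m);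
  meq := ceq (rI R1) (rI R2) (rI R3) (mF m) (mF0 m) (mF n) (mF0 n) (meq m) (meq n);
  mphi := cst eq_refl (eq_sym (comp_assoc (rS R3) (mF0 n) (mF0 m)))
           (vcomp (wr (mphi n) (mF0 m))
                  (cst (comp_assoc (mF n) (mF m) (rS R1)) (comp_assoc (mF n) (rS R2) (mF0 m))
                       (wl (mF n) (mphi m)))) |}.

(** Because J*_{X0} F~ = (- o F0) J*_{Y0}, the
   component F~_Z sends a module (M,(-)_m) to (M F0, (-)_{F~ m}) and a module
   morphism g to g F0; so F~ is given by the operator assignment [lop] below.
   Likewise the modification phi~ is given by its underlying 2-cells
   phi~_M : (M F) S => (M T) F0. *)
Record LiftData (R1 R2 : RelMonad) := {
  lF : hom (rX R1) (rX R2);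
  lF0 : hom (rX0 R1) (rX0 R2);
  leq : comp lF (rI R1) = comp (rI R2) lF0;
  lop : forall (Z : K) (M : hom (rX0 R2) Z) (op : ModOp R2 M),
      IsModule R2 M op -> ModOp R1 (comp M lF0);
  lphi : forall (Z : K) (M : hom (rX R2) Z),
      cell (comp (comp M lF) (rS R1)) (comp (comp M (rS R2)) lF0)
}.
Arguments lF {R1 R2} _.
Arguments lF0 {R1 R2} _.
Arguments leq {R1 R2} _.
Arguments lop {R1 R2} _ {Z} _ _ _.
Arguments lphi {R1 R2} _ {Z} _.

Record IsLifting {R1 R2 : RelMonad} (L : LiftData R1 R2) : Prop := {
  li_mod : forall (Z : K) (M : hom (rX0 R2) Z) (op : ModOp R2 M) (pf : IsModule R2 M op),
      IsModule R1 (comp M (lF0 L)) (lop L M op pf);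
  li_mor : forall (Z : K) (M N : hom (rX0 R2) Z) (opM : ModOp R2 M) (opN : ModOp R2 N)
      (pfM : IsModule R2 M opM) (pfN : IsModule R2 N opN) (g : cell M N),
      IsModMor R2 opM opN g -> IsModMor R1 (lop L M opM pfM) (lop L N opN pfN) (wr g (lF0 L));
  li_nat : forall (Z Z' : K) (G : hom Z Z') (M : hom (rX0 R2) Z) (op : ModOp R2 M)
      (pf : IsModule R2 M op) (pf' : IsModule R2 (comp G M) (postop R2 G op))
      (O : K) (A B : hom O (rX0 R1)) (f : cell (comp (rI R1) A) (comp (rS R1) B)),
      lop L (comp G M) (postop R2 G op) pf' O A B f
      = cst (f_equal (fun h => comp h A) (comp_assoc G M (lF0 L)))
            (f_equal (fun h => comp h B) (comp_assoc G M (lF0 L)))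
            (postop R1 G (lop L M op pf) O A B f);
  li_phi_mor : forall (Z : K) (M : hom (rX R2) Z)
      (pfU : IsModule R2 (comp M (rS R2)) (Uop R2 M)),
      IsModMor R1 (Uop R1 (comp M (lF L))) (lop L (comp M (rS R2)) (Uop R2 M) pfU) (lphi L M);
  li_phi_nat : forall (Z : K) (M M' : hom (rX R2) Z) (a : cell M M'),
      vcomp (lphi L M') (wr (wr a (lF L)) (rS R1))
      = vcomp (wr (wr a (rS R2)) (lF0 L)) (lphi L M);
  li_phi_mod : forall (Z Z' : K) (G : hom Z Z') (M : hom (rX R2) Z),
      lphi L (comp G M)
      = cst (eq_trans (comp_assoc G (comp M (lF L)) (rS R1))
                      (f_equal (fun h => comp h (rS R1)) (comp_assoc G M (lF L))))
            (eq_trans (comp_assoc G (comp M (rS R2)) (lF0 L))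
                      (f_equal (fun h => comp h (lF0 L)) (comp_assoc G M (rS R2))))
            (wl G (lphi L M));
  (* condition (1): (J* phi~)_M . M F s = M t F0 *)
  li_cond1 : forall (Z : K) (M : hom (rX R2) Z),
      cst (eq_trans (eq_sym (comp_assoc M (lF L) (rI R1)))
                    (eq_trans (f_equal (fun h => comp M h) (leq L))
                              (comp_assoc M (rI R2) (lF0 L))))
          eq_refl
          (vcomp (lphi L M) (wl (comp M (lF L)) (runit R1)))
      = wr (wl M (runit R2)) (lF0 L);
  (* condition (2): f_{F~ m} = (f_{F~ T} . t F0 A)_m *)
  li_cond2 : forall (Z : K) (M : hom (rX0 R2) Z) (op : ModOp R2 M) (pf : IsModule R2 M op)
      (pfT : IsModule R2 (rS R2) (rext R2))
      (O : K) (A B : hom O (rX0 R1)) (f : cell (comp (rI R1) A) (comp (rS R1) B)),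
      lop L M op pf O A B f
      = cst (comp_assoc M (lF0 L) A) (comp_assoc M (lF0 L) B)
          (op O (comp (lF0 L) A) (comp (lF0 L) B)
             (vcomp (cst (eq_sym (comp_assoc (rS R2) (lF0 L) A))
                         (eq_sym (comp_assoc (rS R2) (lF0 L) B))
                         (lop L (rS R2) (rext R2) pfT O A B f))
                    (wr (runit R2) (comp (lF0 L) A))))
}.

(** Maps of liftings (p, p0, p~): p~ is forced to have components M p0. *)
Definition IsLiftMap {R1 R2 : RelMonad} (L L' : LiftData R1 R2)
  (p : cell (lF L) (lF L')) (p0 : cell (lF0 L) (lF0 L')) : Prop :=
  cst (leq L) (leq L') (wr p (rI R1)) = wl (rI R2) p0
  /\ (forall (Z : K) (M : hom (rX0 R2) Z) (op : ModOp R2 M) (pf : IsModule R2 M op),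
        IsModMor R1 (lop L M op pf) (lop L' M op pf) (wl M p0))
  /\ (forall (Z : K) (M : hom (rX R2) Z),
        vcomp (lphi L' M) (wr (wl M p) (rS R1))
        = vcomp (wl (comp M (rS R2)) p0) (lphi L M)).

Definition lid (R : RelMonad) : LiftData R R := {|
  lF := idh (rX R);
  lF0 := idh (rX0 R);
  leq := eq_trans (comp_idl (rI R)) (eq_sym (comp_idr (rI R)));
  lop := fun Z M op _ O A B f =>
           cst (f_equal (fun h => comp h A) (eq_sym (comp_idr M)))
               (f_equal (fun h => comp h B) (eq_sym (comp_idr M)))
               (op O A B f);
  lphi := fun Z M =>
           cst (f_equal (fun h => comp h (rS R)) (eq_sym (comp_idr M)))
               (eq_sym (comp_idr (comp M (rS R))))
               (idc (comp M (rS R))) |}.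

Definition lcomp {R1 R2 R3 : RelMonad} (L : LiftData R1 R2) (L' : LiftData R2 R3)
  (hL' : IsLifting L') : LiftData R1 R3 := {|
  lF := comp (lF L') (lF L);
  lF0 := comp (lF0 L') (lF0 L);
  leq := ceq (rI R1) (rI R2) (rI R3) (lF L) (lF0 L) (lF L') (lF0 L') (leq L) (leq L');
  lop := fun Z M op pf O A B f =>
           cst (f_equal (fun h => comp h A) (eq_sym (comp_assoc M (lF0 L') (lF0 L))))
               (f_equal (fun h => comp h B) (eq_sym (comp_assoc M (lF0 L') (lF0 L))))
               (lop L (comp M (lF0 L')) (lop L' M op pf) (li_mod L' hL' Z M op pf) O A B f);
  lphi := fun Z M =>
           cst (f_equal (fun h => comp h (rS R1)) (eq_sym (comp_assoc M (lF L') (lF L))))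
               (eq_sym (comp_assoc (comp M (rS R3)) (lF0 L') (lF0 L)))
               (vcomp (wr (lphi L' M) (lF0 L)) (lphi L (comp M (lF L')))) |}.

(** On 2-cells it sends (p,p0) to (p,p0,p~) with p~ = M p0, i.e. it is the
   identity on the pair (p,p0). *)
Definition Phi1 {R1 R2 : RelMonad} (m : RmdMor R1 R2) : LiftData R1 R2 := {|
  lF := mF m;
  lF0 := mF0 m;
  leq := meq m;
  lop := fun Z M op _ O A B f =>
           cst (comp_assoc M (mF0 m) A) (comp_assoc M (mF0 m) B)
               (op O (comp (mF0 m) A) (comp (mF0 m) B) (bindphi m f));
  lphi := fun Z M =>
           cst (comp_assoc M (mF m) (rS R1)) (comp_assoc M (rS R2) (mF0 m)) (wl M (mphi m)) |}.

End Defs.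
Arguments RelMonad : clear implicits.
Arguments mF {K R1 R2} _.
Arguments mF0 {K R1 R2} _.
Arguments meq {K R1 R2} _.
Arguments mphi {K R1 R2} _.
Arguments lF {K R1 R2} _.
Arguments lF0 {K R1 R2} _.
Arguments leq {K R1 R2} _.
Arguments lop {K R1 R2} _ {Z} _ _ _.
Arguments lphi {K R1 R2} _ {Z} _.

From Stdlib Require Import ProofIrrelevance FunctionalExtensionality.

(* In a strict 2-category the boundaries of 2-cells are only equal up to the
   associativity and unit equations of 1-cells, so most equations between
   2-cells hold only after transport.

   The heart of the argument is the transfer [bindphi m k = phi B . F k] of
   Kleisli cells along a relative monad morphism m: it is natural in O, A, B
   and sends units to units and extensions to extensions.  From this:
   - Phi1 m is a lifting (modules are transferred along [bindphi m]);
   - transformations (p, p0) of morphisms are exactly maps of liftings;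
   - Phi1 preserves identities and composites;
   - Phi1 is bijective on 1-cells: its inverse reads the 2-cell phi off the
     component of phi~ at the identity 1-cell, and condition (2) together
     with the module-morphism property of phi~ forces the lifted operators to
     be the transferred ones. *)

Definition heq {K : TwoCat} {a b : K} {f g f' g' : hom a b}
  (x : cell f g) (y : cell f' g') : Prop :=
  exists (e1 : f = f') (e2 : g = g'), cst e1 e2 x = y.

Infix "≅" := heq (at level 70).

Section CellCalculus.
Context {K : TwoCat} (HK : IsTwoCat K).

Lemma heq_refl {a b : K} {f g : hom a b} (x : cell f g) : x ≅ x.
Proof. exists eq_refl, eq_refl. reflexivity. Qed.

Lemma heq_sym {a b : K} {f g f' g' : hom a b} (x : cell f g) (y : cell f' g') :
  x ≅ y -> y ≅ x.
Proof. intros [e1 [e2 H]]. destruct e1, e2. subst. apply heq_refl. Qed.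

Lemma heq_trans {a b : K} {f g f' g' f'' g'' : hom a b} (x : cell f g) (y : cell f' g')
  (z : cell f'' g'') : x ≅ y -> y ≅ z -> x ≅ z.
Proof. intros [e1 [e2 H]] [e3 [e4 H']]. destruct e1, e2, e3, e4. subst. apply heq_refl. Qed.

(* On 2-cells with the same boundary, [≅] is equality (by uniqueness of
   identity proofs, a consequence of proof irrelevance). *)
Lemma heq_to_eq {a b : K} {f g : hom a b} (x y : cell f g) : x ≅ y -> x = y.
Proof.
  intros [e1 [e2 H]].
  rewrite (proof_irrelevance _ e1 eq_refl), (proof_irrelevance _ e2 eq_refl) in H.
  exact H.
Qed.

Lemma heq_via_eq {a b : K} {f g f' g' f'' g'' : hom a b} (x : cell f g)
  (y y' : cell f' g') (z : cell f'' g'') : x ≅ y -> y = y' -> y' ≅ z -> x ≅ z.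
Proof. intros Hx <- Hz. exact (heq_trans _ _ _ Hx Hz). Qed.

Lemma heq_cast_l {a b : K} {f g f' g' f'' g'' : hom a b} (e1 : f = f') (e2 : g = g')
  (x : cell f g) (y : cell f'' g'') : x ≅ y -> cst e1 e2 x ≅ y.
Proof. intros H. destruct e1, e2. exact H. Qed.

Lemma heq_cast_r {a b : K} {f g f' g' f'' g'' : hom a b} (e1 : f = f') (e2 : g = g')
  (x : cell f g) (y : cell f'' g'') : y ≅ x -> y ≅ cst e1 e2 x.
Proof. intros H. destruct e1, e2. exact H. Qed.

Lemma heq_vcomp {a b : K} {f g h f' g' h' : hom a b} (x : cell f g) (y : cell g h)
  (x' : cell f' g') (y' : cell g' h') : y ≅ y' -> x ≅ x' -> vcomp y x ≅ vcomp y' x'.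
Proof.
  intros [e1 [e2 H]] [e3 [e4 H']]. destruct e1, e2, e3.
  rewrite (proof_irrelevance _ e4 eq_refl) in H'. subst. apply heq_refl.
Qed.

Lemma heq_hcomp {a b c : K} {f f' f1 f1' : hom a b} {g g' g1 g1' : hom b c}
  (y : cell g g') (x : cell f f') (y1 : cell g1 g1') (x1 : cell f1 f1') :
  y ≅ y1 -> x ≅ x1 -> hcomp y x ≅ hcomp y1 x1.
Proof. intros [e1 [e2 H]] [e3 [e4 H']]. destruct e1, e2, e3, e4. subst. apply heq_refl. Qed.

Lemma heq_idc {a b : K} {f f' : hom a b} : f = f' -> idc f ≅ idc f'.
Proof. intros ->. apply heq_refl. Qed.

Lemma heq_wl {a b c : K} {g g1 : hom b c} {f f' f1 f1' : hom a b}
  (x : cell f f') (x1 : cell f1 f1') : g = g1 -> x ≅ x1 -> wl g x ≅ wl g1 x1.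
Proof. intros e H. apply heq_hcomp; [apply heq_idc; exact e | exact H]. Qed.

Lemma heq_wr {a b c : K} {g g' g1 g1' : hom b c} {f f1 : hom a b}
  (x : cell g g') (x1 : cell g1 g1') : x ≅ x1 -> f = f1 -> wr x f ≅ wr x1 f1.
Proof. intros H e. apply heq_hcomp; [exact H | apply heq_idc; exact e]. Qed.

Lemma heq_op {X0 X Z : K} {I S : hom X0 X} {M N : hom X0 Z} (op : OpT I S M N) (O : K)
  (A B A' B' : hom O X0) (k : cell (comp I A) (comp S B)) (k' : cell (comp I A') (comp S B')) :
  A = A' -> B = B' -> k ≅ k' -> op O A B k ≅ op O A' B' k'.
Proof. intros e1 e2 H. destruct e1, e2. apply heq_to_eq in H. subst. apply heq_refl. Qed.

Lemma cst_vcomp {a b : K} {f g h f' h' : hom a b} (e1 : f = f') (e2 : h = h')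
  (y : cell g h) (x : cell f g) :
  cst e1 e2 (vcomp y x) = vcomp (cst eq_refl e2 y) (cst e1 eq_refl x).
Proof. destruct e1, e2. reflexivity. Qed.

Lemma wl_cst {a b c : K} (g : hom b c) {f f' f1 f1' : hom a b} (e1 : f = f1) (e2 : f' = f1')
  (x : cell f f') :
  wl g (cst e1 e2 x) = cst (f_equal (comp g) e1) (f_equal (comp g) e2) (wl g x).
Proof. destruct e1, e2. reflexivity. Qed.

Lemma wr_cst {a b c : K} {g g' g1 g1' : hom b c} (e1 : g = g1) (e2 : g' = g1')
  (x : cell g g') (f : hom a b) :
  wr (cst e1 e2 x) f
  = cst (f_equal (fun h => comp h f) e1) (f_equal (fun h => comp h f) e2) (wr x f).
Proof. destruct e1, e2. reflexivity. Qed.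

Lemma vcomp_reassoc {a b : K} {f g h i : hom a b} (x : cell h i) (y : cell g h) (z : cell f g) :
  vcomp x (vcomp y z) = vcomp (vcomp x y) z.
Proof. apply (vcomp_assoc _ HK). Qed.

Lemma heq_hcomp_assoc {a b c d : K} {f f' : hom a b} {g g' : hom b c} {h h' : hom c d}
  (x : cell h h') (y : cell g g') (z : cell f f') :
  hcomp x (hcomp y z) ≅ hcomp (hcomp x y) z.
Proof. rewrite <- (hcomp_assoc _ HK). apply heq_sym, heq_cast_l, heq_refl. Qed.

Lemma heq_wl_id {a b : K} {f f' : hom a b} (x : cell f f') : wl (idh b) x ≅ x.
Proof.
  eapply heq_via_eq; [| exact (hcomp_idl _ HK _ _ _ _ x) | apply heq_refl].
  apply heq_sym, heq_cast_l, heq_refl.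
Qed.

Lemma heq_vcomp_idl {a b : K} {f g h f' g' k : hom a b} (y : cell g h) (x : cell f g)
  (x' : cell f' g') : y ≅ idc k -> x ≅ x' -> vcomp y x ≅ x'.
Proof.
  intros [e1 [e2 Hy]] Hx. destruct e1, e2. cbn in Hy. subst y.
  rewrite (vcomp_idl _ HK). exact Hx.
Qed.

Lemma wl_vcomp {a b c : K} (g : hom b c) {f f' f'' : hom a b} (y : cell f' f'') (x : cell f f') :
  wl g (vcomp y x) = vcomp (wl g y) (wl g x).
Proof. unfold wl. rewrite <- (interchange _ HK), (vcomp_idl _ HK). reflexivity. Qed.

Lemma wr_vcomp {a b c : K} {g g' g'' : hom b c} (y : cell g' g'') (x : cell g g') (f : hom a b) :
  wr (vcomp y x) f = vcomp (wr y f) (wr x f).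
Proof. unfold wr. rewrite <- (interchange _ HK), (vcomp_idl _ HK). reflexivity. Qed.

Lemma wl_idc {a b c : K} (g : hom b c) (f : hom a b) : wl g (idc f) = idc (comp g f).
Proof. apply (hcomp_idc _ HK). Qed.

Lemma wr_idc {a b c : K} (g : hom b c) (f : hom a b) : wr (idc g) f = idc (comp g f).
Proof. apply (hcomp_idc _ HK). Qed.

Lemma whisker_exchange {a b c : K} {f f' : hom a b} {g g' : hom b c}
  (y : cell g g') (x : cell f f') :
  vcomp (wl g' x) (wr y f) = vcomp (wr y f') (wl g x).
Proof.
  unfold wl, wr. rewrite <- !(interchange _ HK), !(vcomp_idl _ HK), !(vcomp_idr _ HK).
  reflexivity.
Qed.

Lemma heq_wl_wl {a b c d : K} (h : hom c d) (g : hom b c) {f f' : hom a b} (x : cell f f') :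
  wl h (wl g x) ≅ wl (comp h g) x.
Proof.
  unfold wl. eapply heq_trans; [apply heq_hcomp_assoc|].
  apply heq_hcomp; [|apply heq_refl]. rewrite (hcomp_idc _ HK). apply heq_refl.
Qed.

Lemma heq_wr_wr {a b c d : K} {h h' : hom c d} (x : cell h h') (g : hom b c) (f : hom a b) :
  wr (wr x g) f ≅ wr x (comp g f).
Proof.
  unfold wr. apply heq_sym. eapply heq_trans; [|apply heq_hcomp_assoc].
  apply heq_hcomp; [apply heq_refl|]. rewrite (hcomp_idc _ HK). apply heq_refl.
Qed.

Lemma heq_wl_wr {a b c d : K} (h : hom c d) {g g' : hom b c} (y : cell g g') (f : hom a b) :
  wl h (wr y f) ≅ wr (wl h y) f.
Proof. apply heq_hcomp_assoc. Qed.
End CellCalculus.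

Ltac push_whiskers HK :=
  repeat (rewrite ?wl_cst, ?wr_cst, ?cst_vcomp, ?(wl_vcomp HK), ?(wr_vcomp HK)).

Ltac drop_casts :=
  repeat (first [apply heq_refl | apply heq_cast_l | apply heq_cast_r]).

Tactic Notation "heq_by" uconstr(t) :=
  first [solve [apply t; auto] | solve [apply heq_sym; apply t; auto]].

Ltac funext_all := repeat (apply functional_extensionality_dep; intro).

Section Transfer.
Context {K : TwoCat} (HK : IsTwoCat K) {R1 R2 : RelMonad K} (m : RmdMor R1 R2).

Lemma bindphi_wr (O O' : K) (C : hom O' O) (A B : hom O (rX0 R1))
  (k : cell (comp (rI R1) A) (comp (rS R1) B)) :
  bindphi m (cst (eq_sym (comp_assoc (rI R1) A C)) (eq_sym (comp_assoc (rS R1) B C)) (wr k C))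
  ≅ wr (bindphi m k) C.
Proof.
  unfold bindphi. push_whiskers HK. drop_casts. apply heq_vcomp; drop_casts.
  - heq_by heq_wr_wr.
  - heq_by heq_wl_wr.
Qed.

Lemma bindphi_pre (O : K) (A A' B : hom O (rX0 R1)) (a : cell A' A)
  (k : cell (comp (rI R1) A) (comp (rS R1) B)) :
  bindphi m (vcomp k (wl (rI R1) a)) ≅ vcomp (bindphi m k) (wl (rI R2) (wl (mF0 m) a)).
Proof.
  unfold bindphi. push_whiskers HK. rewrite ?(vcomp_reassoc HK).
  drop_casts. apply heq_vcomp; [apply heq_vcomp|]; drop_casts.
  eapply heq_trans; [heq_by heq_wl_wl|]. eapply heq_trans; [|heq_by heq_wl_wl].
  apply heq_wl; [exact (meq m) | apply heq_refl].
Qed.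

Lemma bindphi_post (O : K) (A B B' : hom O (rX0 R1)) (b : cell B B')
  (k : cell (comp (rI R1) A) (comp (rS R1) B)) :
  bindphi m (vcomp (wl (rS R1) b) k) ≅ vcomp (wl (rS R2) (wl (mF0 m) b)) (bindphi m k).
Proof.
  unfold bindphi. push_whiskers HK. rewrite ?(vcomp_reassoc HK).
  drop_casts. apply heq_vcomp; [|drop_casts].
  eapply heq_trans with (y := vcomp (wr (mphi m) B') (wl (comp (mF m) (rS R1)) b)).
  { apply heq_vcomp; drop_casts. heq_by heq_wl_wl. }
  rewrite <- (whisker_exchange HK). apply heq_vcomp; drop_casts. heq_by heq_wl_wl.
Qed.

Hypothesis Hm : IsRmdMor m.

(* The unit axiom of m: the unit of R1 is transferred to the unit of R2. *)
Lemma bindphi_unit (O : K) (A : hom O (rX0 R1)) :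
  bindphi m (wr (runit R1) A) ≅ wr (runit R2) (comp (mF0 m) A).
Proof.
  destruct Hm as [Hunit _].
  eapply heq_trans with (y := wr (vcomp (mphi m) (wl (mF m) (runit R1))) A).
  { unfold bindphi. rewrite (wr_vcomp HK). drop_casts.
    apply heq_vcomp; drop_casts. heq_by heq_wl_wr. }
  eapply heq_trans with (y := wr (wr (runit R2) (mF0 m)) A).
  { apply heq_wr; [|reflexivity]. rewrite <- Hunit. drop_casts. }
  heq_by heq_wr_wr.
Qed.

(* The extension axiom of m: transfer turns Kleisli composition in R1 into
   Kleisli composition in R2. *)
Lemma bindphi_ext (O : K) (A B C : hom O (rX0 R1)) (h : cell (comp (rI R1) A) (comp (rS R1) B))
  (k : cell (comp (rI R1) B) (comp (rS R1) C)) :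
  bindphi m (vcomp (rext R1 O B C k) h)
  ≅ vcomp (rext R2 O (comp (mF0 m) B) (comp (mF0 m) C) (bindphi m k)) (bindphi m h).
Proof.
  destruct Hm as [_ Hext].
  unfold bindphi at 1 3. push_whiskers HK. rewrite ?(vcomp_reassoc HK).
  drop_casts. apply heq_vcomp; [|drop_casts].
  eapply heq_via_eq; [| exact (Hext O B C k) |]; apply heq_vcomp; drop_casts.
Qed.
End Transfer.

Section Forward.
Context {K : TwoCat} (HK : IsTwoCat K) {R1 R2 : RelMonad K} (HR2 : IsRelMonad R2)
  (m : RmdMor R1 R2) (Hm : IsRmdMor m).

Definition transfer_op {Z : K} (M : hom (rX0 R2) Z) (op : ModOp R2 M) : ModOp R1 (comp M (mF0 m)) :=
  fun O A B f => cst (comp_assoc M (mF0 m) A) (comp_assoc M (mF0 m) B)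
               (op O (comp (mF0 m) A) (comp (mF0 m) B) (bindphi m f)).

(* Transferred modules are modules: each module axiom follows from the
   corresponding property of [bindphi m]. *)
Lemma transfer_op_module {Z : K} (M : hom (rX0 R2) Z) (op : ModOp R2 M) :
  IsModule R2 M op -> IsModule R1 (comp M (mF0 m)) (transfer_op M op).
Proof.
  intros [[NatO [NatA NatB]] Unit Comp]. unfold transfer_op.
  split; [split; [|split]|..]; intros; apply heq_to_eq.
  - push_whiskers HK. drop_casts.
    eapply heq_via_eq; [| exact (NatO _ _ C _ _ (bindphi m k)) | drop_casts].
    apply heq_op; try apply comp_assoc. apply heq_cast_r. apply (bindphi_wr HK).
  - drop_casts.
    eapply heq_via_eq; [| exact (NatA _ _ _ _ (wl (mF0 m) a) (bindphi m k)) |].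
    + apply heq_op; try reflexivity. apply (bindphi_pre HK).
    + apply heq_vcomp; drop_casts. heq_by heq_wl_wl.
  - drop_casts.
    eapply heq_via_eq; [| exact (NatB _ _ _ _ (wl (mF0 m) b) (bindphi m k)) |].
    + apply heq_op; try reflexivity. apply (bindphi_post HK).
    + apply heq_vcomp; drop_casts. heq_by heq_wl_wl.
  - drop_casts. eapply heq_trans; [apply heq_op; [reflexivity|reflexivity|apply (bindphi_unit HK m Hm)]|].
    rewrite Unit. apply heq_idc. apply comp_assoc.
  - drop_casts. eapply heq_trans; [apply heq_op; [reflexivity|reflexivity|apply (bindphi_ext HK m Hm)]|].
    rewrite Comp. apply heq_vcomp; drop_casts.
Qed.

Lemma transfer_op_mor {Z : K} (M N : hom (rX0 R2) Z) (opM : ModOp R2 M) (opN : ModOp R2 N)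
  (g : cell M N) :
  IsModMor R2 opM opN g -> IsModMor R1 (transfer_op M opM) (transfer_op N opN) (wr g (mF0 m)).
Proof.
  intros Hg O A B h. apply heq_to_eq.
  eapply heq_trans with (y := vcomp (wr g (comp (mF0 m) B)) (opM O _ _ (bindphi m h))).
  { apply heq_vcomp; drop_casts. heq_by heq_wr_wr. }
  rewrite Hg. apply heq_vcomp; drop_casts. heq_by heq_wr_wr.
Qed.

(* phi~_M = M phi is a module morphism U*(M F) -> F~(U* M): this is M applied
   to the extension axiom of m. *)
Lemma Mphi_module_mor {Z : K} (M : hom (rX R2) Z) :
  IsModMor R1 (Uop R1 (comp M (mF m))) (transfer_op (comp M (rS R2)) (Uop R2 M))
    (cst (comp_assoc M (mF m) (rS R1)) (comp_assoc M (rS R2) (mF0 m)) (wl M (mphi m))).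
Proof.
  intros O A B h. apply heq_to_eq. unfold Uop, transfer_op. push_whiskers HK.
  eapply heq_trans with (y := wl M (vcomp (wr (mphi m) B)
          (cst (comp_assoc (mF m) (rS R1) A) (comp_assoc (mF m) (rS R1) B)
               (wl (mF m) (rext R1 O A B h))))).
  { push_whiskers HK. apply heq_vcomp; drop_casts; [heq_by heq_wl_wr | heq_by heq_wl_wl]. }
  rewrite (proj2 Hm). push_whiskers HK. apply heq_vcomp; drop_casts. heq_by heq_wl_wr.
Qed.

(* Condition (1) of a lifting: M applied to the unit axiom of m. *)
Lemma Mphi_unit {Z : K} (M : hom (rX R2) Z) :
  vcomp (wl M (mphi m)) (wl M (wl (mF m) (runit R1))) ≅ wr (wl M (runit R2)) (mF0 m).
Proof.
  eapply heq_trans with (y := wl M (vcomp (mphi m) (wl (mF m) (runit R1)))).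
  { rewrite (wl_vcomp HK). apply heq_refl. }
  eapply heq_trans with (y := wl M (wr (runit R2) (mF0 m))).
  { apply heq_wl; [reflexivity|]. rewrite <- (proj1 Hm). drop_casts. }
  heq_by heq_wl_wr.
Qed.

Lemma Phi1_lifting : IsLifting (Phi1 m).
Proof.
  split; intros; cbn -[bindphi].
  - exact (transfer_op_module M op pf).
  - exact (transfer_op_mor M N opM opN g H).
  - apply heq_to_eq. unfold postop. push_whiskers HK. drop_casts.
  - exact (Mphi_module_mor M).
  - apply heq_to_eq. push_whiskers HK.
    eapply heq_trans with (y := vcomp (wl M' (mphi m)) (wr a (comp (mF m) (rS R1)))).
    { apply heq_vcomp; drop_casts. heq_by heq_wr_wr. }
    rewrite (whisker_exchange HK). apply heq_vcomp; drop_casts. heq_by heq_wr_wr.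
  - apply heq_to_eq. push_whiskers HK. drop_casts. heq_by heq_wl_wl.
  - apply heq_to_eq. drop_casts. eapply heq_trans; [|apply Mphi_unit].
    apply heq_vcomp; drop_casts. heq_by heq_wl_wl.
  - apply heq_to_eq. drop_casts. apply heq_op; try reflexivity. apply heq_sym.
    eapply heq_trans with
      (y := vcomp (rext R2 O _ _ (bindphi m f)) (wr (runit R2) (comp (mF0 m) A))).
    { apply heq_vcomp; drop_casts. }
    rewrite (rm_unit_l _ HR2). apply heq_refl.
Qed.
End Forward.

Section Cells.
Context {K : TwoCat} (HK : IsTwoCat K) {R1 R2 : RelMonad K}
  (m m' : RmdMor R1 R2) (p : cell (mF m) (mF m')) (p0 : cell (mF0 m) (mF0 m')).

Lemma bindphi_trans (O : K) (A B : hom O (rX0 R1)) (h : cell (comp (rI R1) A) (comp (rS R1) B)) :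
  IsRmdTrans m m' p p0 ->
  vcomp (wl (rS R2) (wr p0 B)) (bindphi m h) ≅ vcomp (bindphi m' h) (wl (rI R2) (wr p0 A)).
Proof.
  intros [Hunit Hphi].
  set (Fh := cst (comp_assoc (mF m) (rI R1) A) (comp_assoc (mF m) (rS R1) B) (wl (mF m) h)).
  set (F'h := cst (comp_assoc (mF m') (rI R1) A) (comp_assoc (mF m') (rS R1) B) (wl (mF m') h)).
  eapply heq_trans with (y := vcomp (wr (vcomp (wl (rS R2) p0) (mphi m)) B) Fh).
  { unfold bindphi. rewrite (wr_vcomp HK). push_whiskers HK. rewrite ?(vcomp_reassoc HK).
    drop_casts. apply heq_vcomp; [apply heq_vcomp|]; drop_casts. heq_by heq_wl_wr. }
  rewrite <- Hphi, (wr_vcomp HK), <- (vcomp_reassoc HK).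
  eapply heq_trans with (y := vcomp (wr (mphi m') B) (vcomp F'h (wr (wr p (rI R1)) A))).
  { apply heq_vcomp; [apply heq_refl|].
    eapply heq_trans with (y := vcomp (wr p (comp (rS R1) B)) (wl (mF m) h)).
    { apply heq_vcomp; [heq_by heq_wr_wr|]. unfold Fh. drop_casts. }
    rewrite <- (whisker_exchange HK). apply heq_vcomp; [unfold F'h; drop_casts|].
    heq_by heq_wr_wr. }
  rewrite (vcomp_reassoc HK). apply heq_vcomp.
  - unfold bindphi, F'h. drop_casts.
  - eapply heq_trans with (y := wr (wl (rI R2) p0) A); [|heq_by heq_wl_wr].
    apply heq_wr; [|reflexivity]. rewrite <- Hunit. drop_casts.
Qed.

Lemma trans_to_liftmap : IsRmdTrans m m' p p0 -> IsLiftMap (Phi1 m) (Phi1 m') p p0.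
Proof.
  intros Htrans. pose proof Htrans as [Hunit Hphi]. split; [exact Hunit|split].
  - intros Z M op pf O A B h. pose proof pf as [[_ [NatA NatB]] _ _].
    cbn -[bindphi]. apply heq_to_eq.
    eapply heq_trans with (y := op O (comp (mF0 m) A) (comp (mF0 m') B)
         (vcomp (wl (rS R2) (wr p0 B)) (bindphi m h))).
    { rewrite NatB. apply heq_vcomp; drop_casts. heq_by heq_wl_wr. }
    eapply heq_trans with (y := op O (comp (mF0 m) A) (comp (mF0 m') B)
         (vcomp (bindphi m' h) (wl (rI R2) (wr p0 A)))).
    { apply heq_op; try reflexivity. exact (bindphi_trans O A B h Htrans). }
    rewrite NatA. apply heq_vcomp; drop_casts. heq_by heq_wl_wr.
  - intros Z M. cbn. apply heq_to_eq.
    eapply heq_trans with (y := wl M (vcomp (mphi m') (wr p (rS R1)))).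
    { rewrite (wl_vcomp HK). apply heq_vcomp; drop_casts. heq_by heq_wl_wr. }
    rewrite Hphi, (wl_vcomp HK). apply heq_vcomp; drop_casts. heq_by heq_wl_wl.
Qed.

(* Conversely, the phi~-axiom at the identity 1-cell is the second
   transformation axiom. *)
Lemma liftmap_to_trans : IsLiftMap (Phi1 m) (Phi1 m') p p0 -> IsRmdTrans m m' p p0.
Proof.
  intros [Hunit [_ Hphi]]. split; [exact Hunit|]. specialize (Hphi _ (idh _)). cbn in Hphi.
  apply heq_to_eq. eapply heq_via_eq; [| exact Hphi |].
  - apply heq_vcomp; drop_casts.
    + heq_by heq_wl_id.
    + apply heq_wr; [|reflexivity]. heq_by heq_wl_id.
  - apply heq_vcomp; drop_casts; [apply heq_wl; [apply comp_idl | apply heq_refl]|].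
    heq_by heq_wl_id.
Qed.
End Cells.

Section Functoriality.
Context {K : TwoCat} (HK : IsTwoCat K).

Lemma Phi1_id (R : RelMonad K) : Phi1 (rid R) = lid R.
Proof.
  unfold Phi1, lid. cbn. f_equal.
  - funext_all. apply heq_to_eq. drop_casts. apply heq_op; try apply comp_idl.
    unfold bindphi. drop_casts. eapply (heq_vcomp_idl HK).
    + cbn. push_whiskers HK. drop_casts. rewrite (wr_idc HK). apply heq_refl.
    + drop_casts. heq_by heq_wl_id.
  - funext_all. apply heq_to_eq. push_whiskers HK. drop_casts. rewrite (wl_idc HK). apply heq_refl.
Qed.

Lemma Phi1_comp (R1 R2 R3 : RelMonad K) (m : RmdMor R1 R2) (n : RmdMor R2 R3)
  (hn : IsLifting (Phi1 n)) : Phi1 (rcomp m n) = lcomp (Phi1 m) (Phi1 n) hn.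
Proof.
  unfold lcomp, Phi1. cbn -[bindphi cst]. f_equal.
  - funext_all. apply heq_to_eq. drop_casts.
    apply heq_op; [symmetry; apply comp_assoc | symmetry; apply comp_assoc |].
    unfold bindphi. cbn [mphi mF mF0 meq rcomp]. push_whiskers HK. rewrite ?(vcomp_reassoc HK).
    drop_casts. apply heq_vcomp; [apply heq_vcomp|]; drop_casts.
    + heq_by heq_wr_wr.
    + heq_by heq_wl_wr.
    + heq_by heq_wl_wl.
  - funext_all. apply heq_to_eq. cbn [mphi mF mF0 meq rcomp lphi]. push_whiskers HK.
    drop_casts. apply heq_vcomp; drop_casts.
    + heq_by heq_wl_wr.
    + heq_by heq_wl_wl.
Qed.
End Functoriality.

(* The inverse of Phi1 on 1-cells: phi is the component of phi~ at the
   identity 1-cell of the codomain. *)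
Section Inverse.
Context {K : TwoCat} (HK : IsTwoCat K) {R1 R2 : RelMonad K}.

Definition phi_of_lifting (L : LiftData R1 R2) : cell (comp (lF L) (rS R1)) (comp (rS R2) (lF0 L)) :=
  cst (f_equal (fun h => comp h (rS R1)) (comp_idl (lF L)))
      (f_equal (fun h => comp h (lF0 L)) (comp_idl (rS R2))) (lphi L (idh (rX R2))).

Definition rmd_of_lifting (L : LiftData R1 R2) : RmdMor R1 R2 :=
  {| mF := lF L; mF0 := lF0 L; meq := leq L; mphi := phi_of_lifting L |}.

Lemma rmd_of_Phi1 (m : RmdMor R1 R2) : rmd_of_lifting (Phi1 m) = m.
Proof.
  destruct m as [F F0 e phi]. unfold rmd_of_lifting. cbn. f_equal.
  apply heq_to_eq. unfold phi_of_lifting. cbn. drop_casts. heq_by heq_wl_id.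
Qed.

Lemma relmonad_self_module (R : RelMonad K) : IsRelMonad R -> IsModule R (rS R) (rext R).
Proof. intros []. split; assumption. Qed.

Lemma module_transport (R : RelMonad K) {Z : K} (M M' : hom (rX0 R) Z)
  (op : ModOp R M) (op' : ModOp R M') :
  IsModule R M op -> M = M' -> (forall O A B k, op O A B k ≅ op' O A B k) -> IsModule R M' op'.
Proof.
  intros H e Hop. destruct e.
  replace op' with op; [exact H|]. funext_all. apply heq_to_eq, Hop.
Qed.

Lemma lop_heq (L : LiftData R1 R2) {Z : K} (M M' : hom (rX0 R2) Z)
  (op : ModOp R2 M) (op' : ModOp R2 M') pf pf' :
  M = M' -> (forall O A B k, op O A B k ≅ op' O A B k) ->
  forall O A B f, lop L M op pf O A B f ≅ lop L M' op' pf' O A B f.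
Proof.
  intros e Hop. destruct e.
  assert (op = op') as <- by (funext_all; apply heq_to_eq, Hop).
  rewrite (proof_irrelevance _ pf pf'). intros. apply heq_refl.
Qed.

Lemma lphi_heq (L : LiftData R1 R2) {Z : K} (M M' : hom (rX R2) Z) :
  M = M' -> lphi L M ≅ lphi L M'.
Proof. intros <-. apply heq_refl. Qed.

Context (HR1 : IsRelMonad R1) (HR2 : IsRelMonad R2) (L : LiftData R1 R2) (HL : IsLifting L).

Let selfT := relmonad_self_module R2 HR2.

Lemma U_id_module : IsModule R2 (comp (idh (rX R2)) (rS R2)) (Uop R2 (idh (rX R2))).
Proof.
  apply (module_transport R2 (rS R2) _ (rext R2) _ selfT).
  - symmetry; apply comp_idl.
  - intros. unfold Uop. drop_casts. heq_by heq_wl_id.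
Qed.

(* Key fact: the lifting of the module T is determined by phi~, namely
   F~ acts on T by f |-> (bindphi f)^dagger.  This uses condition (2), the
   unit law of R1, condition (1) and phi~ being a module morphism. *)
Lemma lifted_self_op (O : K) (A B : hom O (rX0 R1)) (f : cell (comp (rI R1) A) (comp (rS R1) B)) :
  lop L (rS R2) (rext R2) selfT O A B f
  ≅ rext R2 O (comp (lF0 L) A) (comp (lF0 L) B) (bindphi (rmd_of_lifting L) f).
Proof.
  set (Id := idh (rX R2)).
  pose proof (li_phi_mor _ HL _ Id U_id_module O A B f) as PhiMor.
  pose proof (li_cond1 _ HL _ Id) as Cond1.
  eapply heq_trans; [rewrite (li_cond2 _ HL _ _ _ selfT selfT); apply heq_refl|].
  drop_casts. apply heq_op; try reflexivity.
  eapply heq_trans with (y := vcomp (lop L (comp Id (rS R2)) (Uop R2 Id) U_id_module O A B f)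
     (vcomp (wr (lphi L Id) A) (wr (wl (comp Id (lF L)) (runit R1)) A))).
  { apply heq_vcomp.
    - drop_casts. apply lop_heq; [symmetry; apply comp_idl|].
      intros. unfold Uop. drop_casts. heq_by heq_wl_id.
    - rewrite <- (wr_vcomp HK).
      eapply heq_trans with (y := wr (wr (wl Id (runit R2)) (lF0 L)) A).
      + eapply heq_trans; [|heq_by heq_wr_wr]. apply heq_wr; [|reflexivity]. heq_by heq_wl_id.
      + apply heq_wr; [|reflexivity]. rewrite <- Cond1. drop_casts. }
  rewrite (vcomp_reassoc HK), <- PhiMor, <- (vcomp_reassoc HK).
  unfold bindphi. drop_casts. apply heq_vcomp.
  - apply heq_wr; [|reflexivity]. cbn. unfold phi_of_lifting. drop_casts.
  - eapply heq_trans with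
      (y := wl (comp Id (lF L)) (vcomp (rext R1 O A B f) (wr (runit R1) A))).
    { rewrite (wl_vcomp HK). apply heq_vcomp; [unfold Uop; drop_casts | heq_by heq_wl_wr]. }
    rewrite (rm_unit_l _ HR1). drop_casts. apply heq_wl; [apply comp_idl | apply heq_refl].
Qed.

Lemma rmd_of_lifting_mor : IsRmdMor (rmd_of_lifting L).
Proof.
  set (Id := idh (rX R2)). split.
  - apply heq_to_eq. drop_casts. cbn [mphi mF rmd_of_lifting].
    eapply heq_via_eq; [| exact (li_cond1 _ HL _ Id) |].
    + drop_casts. apply heq_vcomp.
      * unfold phi_of_lifting. drop_casts.
      * apply heq_wl; [symmetry; apply comp_idl | apply heq_refl].
    + apply heq_wr; [|reflexivity]. heq_by heq_wl_id.
  - intros O A B k. apply heq_to_eq. cbn [mphi mF mF0 rmd_of_lifting].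
    eapply heq_via_eq; [| exact (li_phi_mor _ HL _ Id U_id_module O A B k) |].
    + apply heq_vcomp.
      * apply heq_wr; [|reflexivity]. unfold phi_of_lifting. drop_casts.
      * unfold Uop. drop_casts. apply heq_wl; [symmetry; apply comp_idl | apply heq_refl].
    + apply heq_vcomp.
      * drop_casts. eapply heq_trans; [|apply lifted_self_op].
        apply lop_heq; [apply comp_idl|]. intros. unfold Uop. drop_casts. heq_by heq_wl_id.
      * apply heq_wr; [|reflexivity]. unfold phi_of_lifting. drop_casts.
Qed.

(* rmd_of_lifting is a right inverse of Phi1 on liftings: the operators are
   recovered by condition (2) and [lifted_self_op], phi~ by its modification
   axiom. *)
Lemma Phi1_rmd_of_lifting : Phi1 (rmd_of_lifting L) = L.
Proof.
  transitivity {| lF := lF L; lF0 := lF0 L; leq := leq L;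
                  lop := @lop _ _ _ L; lphi := @lphi _ _ _ L |};
    [|destruct L; reflexivity].
  unfold Phi1. cbn -[bindphi cst]. f_equal.
  - funext_all. rename x into Z, x0 into M, x1 into op, x2 into pf,
      x3 into O, x4 into A, x5 into B, x6 into f.
    apply heq_to_eq. rewrite (li_cond2 _ HL _ _ _ pf selfT).
    drop_casts. apply heq_op; try reflexivity. apply heq_sym.
    eapply heq_trans with (y := vcomp (rext R2 O _ _ (bindphi (rmd_of_lifting L) f))
                                      (wr (runit R2) (comp (lF0 L) A))).
    { apply heq_vcomp; [drop_casts; apply lifted_self_op | apply heq_refl]. }
    rewrite (rm_unit_l _ HR2). apply heq_refl.
  - funext_all. rename x into Z, x0 into M.
    apply heq_to_eq. eapply heq_trans; [|apply lphi_heq; apply comp_idr].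
    rewrite (li_phi_mod _ HL). drop_casts. apply heq_wl; [reflexivity|].
    unfold phi_of_lifting. drop_casts.
Qed.
End Inverse.

Theorem mainTheorem17 (K : TwoCat) (HK : IsTwoCat K) :
  (* bijection on 1-cells and on 2-cells, for each pair of objects *)
  (forall R1 R2 : RelMonad K, IsRelMonad R1 -> IsRelMonad R2 ->
     (forall m : RmdMor R1 R2, IsRmdMor m -> IsLifting (Phi1 m))
     /\ (forall m m' : RmdMor R1 R2, IsRmdMor m -> IsRmdMor m' -> Phi1 m = Phi1 m' -> m = m')
     /\ (forall L : LiftData R1 R2, IsLifting L -> exists m, IsRmdMor m /\ Phi1 m = L)
     /\ (forall (m m' : RmdMor R1 R2) (p : cell (mF m) (mF m')) (p0 : cell (mF0 m) (mF0 m')),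
           IsRmdMor m -> IsRmdMor m' ->
           (IsRmdTrans m m' p p0 <-> IsLiftMap (Phi1 m) (Phi1 m') p p0)))
  (* preservation of identity 1-cells *)
  /\ (forall R : RelMonad K, IsRelMonad R -> Phi1 (rid R) = lid R)
  (* preservation of composition of 1-cells *)
  /\ (forall R1 R2 R3 : RelMonad K, IsRelMonad R1 -> IsRelMonad R2 -> IsRelMonad R3 ->
      forall (m : RmdMor R1 R2) (n : RmdMor R2 R3),
        IsRmdMor m -> IsRmdMor n ->
        forall hn : IsLifting (Phi1 n),
          Phi1 (rcomp m n) = lcomp (Phi1 m) (Phi1 n) hn).
Proof.
  split; [|split].
  - intros R1 R2 HR1 HR2. split; [|split; [|split]].
    + intros m Hm. exact (Phi1_lifting HK HR2 m Hm).
    + intros m m' _ _ Heq.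
      rewrite <- (rmd_of_Phi1 HK m), Heq. apply rmd_of_Phi1; exact HK.
    + intros L HL. exists (rmd_of_lifting L). split.
      * exact (rmd_of_lifting_mor HK HR1 HR2 L HL).
      * exact (Phi1_rmd_of_lifting HK HR1 HR2 L HL).
    + intros m m' p p0 _ _.
      split; [apply trans_to_liftmap | apply liftmap_to_trans]; exact HK.
  - intros R _. exact (Phi1_id HK R).
  - intros R1 R2 R3 _ _ _ m n _ _ hn. exact (Phi1_comp HK R1 R2 R3 m n hn).
Qed.
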